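(* Let $A\in\mathbb{R}^{s\times s}$ and $b\in\mathbb{R}^s$ be the coefficients of an $s$-stage Runge–Kutta scheme with $c=Ae$, $e=(1,\dots,1)^T$, and let $\tilde q\ge 1$ be an integer. For $j\ge1$ define $g^{(j)}(\zeta)=\zeta\, b^T (I-\zeta A)^{-1}\tau^{(j)}$. Then $g^{(j)}(\zeta)=0$ for all $\zeta>0$ for which $I-\zeta A$ is invertible and all $1\le j\le \tilde q$, if and only if the scheme has weak stage order $\tilde q$.
   Context: Powers of vectors are componentwise. The stage order vectors are $\tau^{(j)} = A c^{j-1} - \tfrac{1}{j}c^{j}$, $j=1,2,\dots$. The scheme is said to have weak stage order $\tilde q$ if there exists a subspace $V\subseteq\mathbb{R}^s$ with $AV\subseteq V$, $b^T v=0$ for all $v\in V$, and $\tau^{(j)}\in V$ for all $1\le j\le\tilde q$. *)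

From HB Require Import structures.
From mathcomp Require Import all_boot all_order all_algebra.
Set Implicit Arguments. Unset Strict Implicit. Unset Printing Implicit Defensive.
Import Order.TTheory GRing.Theory Num.Theory.
Local Open Scope ring_scope.

Section RK.
Variables (R : realFieldType) (s : nat).

Definition ones : 'cV[R]_s := const_mx 1.

Definition abscissae (A : 'M[R]_s) : 'cV[R]_s := A *m ones.

Definition cpow (v : 'cV[R]_s) (k : nat) : 'cV[R]_s := map_mx (fun x => x ^+ k) v.

Definition tau (A : 'M[R]_s) (j : nat) : 'cV[R]_s :=
  A *m cpow (abscissae A) j.-1 - (j%:R)^-1 *: cpow (abscissae A) j.

Definition gfun (A : 'M[R]_s) (b : 'cV[R]_s) (j : nat) (zeta : R) : R :=
  zeta * (b^T *m invmx (1%:M - zeta *: A) *m tau A j) 0 0.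

Definition weak_stage_order (A : 'M[R]_s) (b : 'cV[R]_s) (q : nat) : Prop :=
  exists V : {vspace 'cV[R]_s},
    (forall v, v \in V -> A *m v \in V) /\
    (forall v, v \in V -> b^T *m v = 0) /\
    (forall j, (1 <= j <= q)%N -> tau A j \in V).

End RK.

From HB Require Import structures.
From mathcomp Require Import all_boot all_order all_algebra.
Set Implicit Arguments. Unset Strict Implicit. Unset Printing Implicit Defensive.
Import Order.TTheory GRing.Theory Num.Theory.
Local Open Scope ring_scope.

(* If V is A-invariant and b^T V = 0, then I - zA stabilises V, hence so does
   its inverse, and every g^(j) vanishes.  Conversely, write
   b^T (I - zA)^-1 t = b^T adj(I - zA) t / det(I - zA): the product of the
   numerator and the denominator is a polynomial in z vanishing at every
   z > 0, so the numerator vanishes identically, and the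
   identity adj(I - zA) = det(I - zA) I + z A adj(I - zA) then peels off
   b^T A^m t = 0 one m at a time (these are the Taylor coefficients of the
   resolvent at 0).  So every tau^(j) lies in the unobservable subspace
   {v | forall m, b^T A^m v = 0}, which is A-invariant, killed by b^T, and by
   Cayley-Hamilton cut out by the finitely many conditions m < s. *)

Lemma poly_eq0_on_pos (R : numDomainType) (p : {poly R}) :
  (forall z, 0 < z -> p.[z] = 0) -> p = 0.
Proof.
move=> p0; apply: (@roots_geq_poly_eq0 _ p [seq i.+1%:R | i <- iota 0 (size p)]).
- by apply/allP => _ /mapP [i _ ->]; apply/rootP/p0; rewrite ltr0Sn.
- by rewrite map_inj_uniq ?iota_uniq // => i j /eqP; rewrite eqr_nat => /eqP [].
- by rewrite size_map size_iota.
Qed.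

Lemma horner_mx_coef (R : comNzRingType) n (A : 'M[R]_n.+1) (p : {poly R}) :
  horner_mx A p = \sum_(i < size p) p`_i *: A ^+ i.
Proof.
rewrite -{1}(coefK p) poly_def rmorph_sum; apply: eq_bigr => i _.
by rewrite /= horner_mxZ rmorphXn /= horner_mx_X.
Qed.

Lemma mulmx_mxpow_eq0 (R : fieldType) n p r (A : 'M[R]_n)
    (X : 'M_(p, n)) (Y : 'M_(n, r)) :
  (forall m, (m < n)%N -> X *m A ^+ m *m Y = 0) ->
  forall m, X *m A ^+ m *m Y = 0.
Proof.
case: n A X Y => [|n] A X Y XAY0 m; first by rewrite thinmx0 !mul0mx.
have chiA_neq0 : char_poly A != 0 by rewrite monic_neq0 ?char_poly_monic.
have -> : A ^+ m = horner_mx A ('X^m %% char_poly A).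
  rewrite -[in LHS](horner_mx_X A) -rmorphXn /= {1}(divp_eq 'X^m (char_poly A)).
  by rewrite rmorphD rmorphM /= Cayley_Hamilton mulr0 add0r.
rewrite horner_mx_coef mulmx_sumr mulmx_suml big1 // => i _.
rewrite -scalemxAr -scalemxAl XAY0 ?scaler0 //.
rewrite -ltnS -(size_char_poly A); apply: leq_ltn_trans (ltn_ord i) _.
by rewrite ltn_modp.
Qed.

Lemma map_mx_horner_polyC (R : comNzRingType) (z : R) p q (M : 'M[R]_(p, q)) :
  map_mx (horner_eval z) (map_mx polyC M) = M.
Proof. by apply/matrixP => i j; rewrite !mxE horner_evalE hornerC. Qed.

Lemma invmx_stable (K : fieldType) n (V : {vspace 'cV[K]_n}) (M : 'M_n) :
  (forall v, v \in V -> M *m v \in V) -> M \in unitmx ->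
  forall v, v \in V -> invmx M *m v \in V.
Proof.
move=> MV Munit; pose f : 'End('cV[K]_n) := linfun (mulmx M).
have fV : (f @: V <= V)%VS.
  by apply/subvP => _ /memv_imgP [u uV ->]; rewrite lfunE MV.
have f_inj : lker f == 0%VS.
  by apply/lker0P => u v; rewrite !lfunE; apply: (can_inj (mulKmx Munit)).
have dim_fV : \dim (f @: V) = \dim V by rewrite limg_dim_eq // (eqP f_inj) capv0.
have fV_eq : (f @: V)%VS = V by apply/eqP; rewrite eqEdim fV dim_fV leqnn.
move=> v; rewrite -{1}fV_eq => /memv_imgP [u uV ->].
by rewrite lfunE mulKmx.
Qed.

Section Resolvent.
Variables (R : numFieldType) (n : nat) (A : 'M[R]_n).

Let pencil : 'M[{poly R}]_n := 1%:M - 'X *: map_mx polyC A.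

Let adj_form (u : 'rV_n) (t : 'cV_n) : {poly R} :=
  (map_mx polyC u *m \adj pencil *m map_mx polyC t) 0 0.

Lemma horner_pencil z : map_mx (horner_eval z) pencil = 1%:M - z *: A.
Proof. by apply/matrixP => i j; rewrite !mxE horner_evalE !hornerE hornerMn hornerC. Qed.

Lemma horner_det_pencil z : (\det pencil).[z] = \det (1%:M - z *: A).
Proof. by rewrite -horner_evalE -det_map_mx horner_pencil. Qed.

Lemma horner_adj_form z u t :
  (adj_form u t).[z] = (u *m \adj (1%:M - z *: A) *m t) 0 0.
Proof.
transitivity
  (map_mx (horner_eval z) (map_mx polyC u *m \adj pencil *m map_mx polyC t) 0 0).
  by rewrite mxE.
by rewrite !map_mxM map_mx_adj horner_pencil !map_mx_horner_polyC.
Qed.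

Lemma horner0_adj_form u t : (adj_form u t).[0] = (u *m t) 0 0.
Proof. by rewrite horner_adj_form scale0r subr0 adj1 mulmx1. Qed.

Lemma det_pencil_neq0 : \det pencil != 0.
Proof.
apply: contra_neq (oner_neq0 R) => det0.
by rewrite -(det1 R n) -(subr0 1%:M) -(scale0r A) -horner_det_pencil det0 horner0.
Qed.

Lemma adj_form_shift u t :
  adj_form u t = ((u *m t) 0 0)%:P * \det pencil + 'X * adj_form (u *m A) t.
Proof.
have adjE : \adj pencil = (\det pencil)%:M + 'X *: (map_mx polyC A *m \adj pencil).
  by rewrite -mul_mx_adj mulmxBl mul1mx -scalemxAl subrK.
rewrite /adj_form {1}adjE mulmxDr mulmxDl mxE; congr (_ + _).
  by rewrite mul_mx_scalar -scalemxAl mxE mulrC -map_mxM mxE.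
by rewrite -scalemxAr -scalemxAl mxE map_mxM !mulmxA.
Qed.

Lemma resolvent_eq0_mxpow (u : 'rV_n) (t : 'cV_n) :
  (forall z, 0 < z -> (1%:M - z *: A) \in unitmx ->
     u *m invmx (1%:M - z *: A) *m t = 0) ->
  forall m, u *m A ^+ m *m t = 0.
Proof.
move=> resolvent0.
suff adj0 m : adj_form (u *m A ^+ m) t = 0.
  by move=> m; rewrite [LHS]mx11_scalar -horner0_adj_form adj0 horner0 raddf0.
elim: m => [|m IHm].
  rewrite expr0 mulmx1; apply: (mulIf det_pencil_neq0); rewrite mul0r.
  apply: poly_eq0_on_pos => z z_gt0; rewrite hornerM horner_adj_form horner_det_pencil.
  set M := 1%:M - z *: A; have [Munit | Msing] := boolP (M \in unitmx).
    have -> : \adj M = \det M *: invmx M.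
      by rewrite /invmx Munit scalerA divff ?scale1r // -unitfE -unitmxE.
    by rewrite -scalemxAr -scalemxAl mxE resolvent0 // mxE mulr0 mul0r.
  by move: Msing; rewrite unitmxE unitfE negbK => /eqP ->; rewrite mulr0.
have := adj_form_shift (u *m A ^+ m) t.
rewrite IHm -horner0_adj_form IHm horner0 polyC0 mul0r add0r.
move=> /esym/eqP; rewrite mulf_eq0 polyX_eq0 /= => /eqP.
by rewrite -mulmxA mulmxE -exprSr.
Qed.

End Resolvent.

Section Unobservable.
Variables (R : fieldType) (n : nat) (u : 'rV[R]_n) (A : 'M[R]_n).

Definition obsmx : 'M[R]_n := \matrix_(m < n) (u *m A ^+ m).

Definition unobservable : {vspace 'cV[R]_n} := lker (linfun (mulmx obsmx)).

Lemma unobservableP v :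
  reflect (forall m, u *m A ^+ m *m v = 0) (v \in unobservable).
Proof.
rewrite memv_ker lfunE /=; apply: (iffP eqP) => [obs_v0 | uAv0].
  apply: mulmx_mxpow_eq0 => m m_lt_n.
  by have := congr1 (row (Ordinal m_lt_n)) obs_v0; rewrite row_mul rowK row0.
by apply/row_matrixP => m; rewrite row_mul rowK row0 uAv0.
Qed.

Lemma unobservable_stable v : v \in unobservable -> A *m v \in unobservable.
Proof.
move/unobservableP => uAv0; apply/unobservableP => m.
by rewrite mulmxA -[_ *m A]mulmxA mulmxE -exprSr uAv0.
Qed.

Lemma unobservable_ker v : v \in unobservable -> u *m v = 0.
Proof. by move/unobservableP/(_ 0%N); rewrite expr0 mulmx1. Qed.

End Unobservable.

Lemma gfun_eq0 (R : realFieldType) s (A : 'M[R]_s) (b : 'cV[R]_s) j z : z != 0 ->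
  gfun A b j z = 0 <-> b^T *m invmx (1%:M - z *: A) *m tau A j = 0.
Proof.
rewrite /gfun => z_neq0; split => [/eqP | ->]; last by rewrite mxE mulr0.
by rewrite mulf_eq0 (negbTE z_neq0) /= [X in X = 0]mx11_scalar => /eqP ->; rewrite raddf0.
Qed.

Theorem theorem2 (R : realFieldType) (s : nat) (A : 'M[R]_s) (b : 'cV[R]_s)
  (q : nat) (hq : (1 <= q)%N) :
  (forall zeta : R, 0 < zeta -> (1%:M - zeta *: A) \in unitmx ->
     forall j : nat, (1 <= j <= q)%N -> gfun A b j zeta = 0)
  <-> weak_stage_order A b q.
Proof.
split=> [g0 | [V [AV [bV tauV]]] z z_gt0 z_unit j j_le_q].
  exists (unobservable b^T A); split; [exact: unobservable_stable | split].
    exact: unobservable_ker.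
  move=> j j_le_q; apply/unobservableP/resolvent_eq0_mxpow => z z_gt0 z_unit.
  exact/(gfun_eq0 A b j (lt0r_neq0 z_gt0))/g0.
have pencilV v : v \in V -> (1%:M - z *: A) *m v \in V.
  by move=> vV; rewrite mulmxBl mul1mx -scalemxAl rpredB ?rpredZ ?AV.
apply/(gfun_eq0 A b j (lt0r_neq0 z_gt0)); rewrite -mulmxA.
by apply/bV/invmx_stable/tauV.
Qed.
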